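(* Let $s\in\{0,\tfrac12\}$, $\lambda\in\mathbb{C}$ and $\sigma\in\mathrm{Aut}(\mathfrak{L}^s_\lambda)$. Then $\sigma(H_p)\in\mathbf{H}:=\mathrm{span}_{\mathbb{C}}\{H_q:q\in s+\mathbb{Z}\}$ for every $p\in s+\mathbb{Z}$.
   Context: For $s\in\{0,\tfrac12\}$ and $\lambda\in\mathbb{C}$, $\mathfrak{L}^s_\lambda$ is the complex Lie superalgebra with basis $\{L_m,I_m,G_p,H_p : m\in\mathbb{Z},\ p\in s+\mathbb{Z}\}$, even part spanned by the $L_m,I_m$, odd part spanned by the $G_p,H_p$, with brackets $[L_m,L_n]=(m-n)L_{m+n}$, $[L_m,I_n]=(m-n)I_{m+n}$, $[L_m,H_p]=(\tfrac m2-p)H_{m+p}$, $[L_m,G_p]=(\tfrac m2-p)G_{m+p}+\lambda(m+1)H_{m+p}$, $[I_m,G_p]=(m-2p)H_{m+p}$, $[G_p,G_q]=I_{p+q}$, plus super-antisymmetry; all other brackets of basis elements are zero. $\mathrm{Aut}(\mathfrak{L})$ is the group of bijective parity-preserving linear maps $\sigma$ with $\sigma([x,y])=[\sigma(x),\sigma(y)]$. *)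

(* The superalgebra L^s_lambda is modelled as the free vector
   space over F on the basis B = {L_m, I_m, G_p, H_p}; elements are formal
   finite linear combinations (seq (F * B)), compared through their
   coefficient functions [coef]. *)
From HB Require Import structures.
From mathcomp Require Import all_boot all_order all_algebra.
Set Implicit Arguments. Unset Strict Implicit. Unset Printing Implicit Defensive.
Import Order.TTheory GRing.Theory Num.Theory.
Local Open Scope ring_scope.

Variant lab := LL | II | GG | HH.

Definition lab_eqb (a b : lab) : bool :=
  match a, b with
  | LL, LL | II, II | GG, GG | HH, HH => true
  | _, _ => false
  end.
Lemma lab_eqP : Equality.axiom lab_eqb.
Proof. by case; case; constructor. Qed.
HB.instance Definition _ := hasDecEq.Build lab lab_eqP.

Definition odd_lab (a : lab) : bool :=
  match a with GG | HH => true | _ => false end.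

(* Basis element (a, n):
   - a = LL or II : the element L_n resp. I_n  (n : int);
   - a = GG or HH : the element G_p resp. H_p with p = n + s,
     where s = 0 if hs = false and s = 1/2 if hs = true. *)
Definition B := (lab * int)%type.

Section Alg.
Variables (F : fieldType) (hs : bool) (lam : F).

Definition elt := seq (F * B).

Definition coef (u : elt) (b : B) : F := \sum_(x <- u | x.2 == b) x.1.

Definition basis (b : B) : elt := [:: (1, b)].

Definition sval : F := if hs then 2^-1 else 0.
Definition pv (n : int) : F := n%:~R + sval.

Definition half (m : int) : F := m%:~R / 2%:R.

(* bracket of basis elements (super-antisymmetry already applied) *)
Definition brB (x y : B) : elt :=
  match x, y with
  | (LL, m), (LL, n) => [:: ((m - n)%:~R, (LL, m + n))]
  | (LL, m), (II, n) => [:: ((m - n)%:~R, (II, m + n))]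
  | (II, n), (LL, m) => [:: (- (m - n)%:~R, (II, m + n))]
  | (LL, m), (HH, n) => [:: (half m - pv n, (HH, m + n))]
  | (HH, n), (LL, m) => [:: (- (half m - pv n), (HH, m + n))]
  | (LL, m), (GG, n) => [:: (half m - pv n, (GG, m + n));
                           (lam * (m + 1)%:~R, (HH, m + n))]
  | (GG, n), (LL, m) => [:: (- (half m - pv n), (GG, m + n));
                           (- (lam * (m + 1)%:~R), (HH, m + n))]
  | (II, m), (GG, n) => [:: (m%:~R - 2%:R * pv n, (HH, m + n))]
  | (GG, n), (II, m) => [:: (- (m%:~R - 2%:R * pv n), (HH, m + n))]
  | (GG, n1), (GG, n2) => [:: (1, (II, n1 + n2 + (nat_of_bool hs)%:Z))]
  | _, _ => [::]
  end.

Definition scale (c : F) (u : elt) : elt := [seq (c * x.1, x.2) | x <- u].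

Definition bracket (u v : elt) : elt :=
  flatten [seq scale (x.1 * y.1) (brB x.2 y.2) | x <- u, y <- v].

Definition ext (sig : B -> elt) (u : elt) : elt :=
  flatten [seq scale x.1 (sig x.2) | x <- u].

Definition is_aut (sig : B -> elt) : Prop :=
  [/\ (forall b b', odd_lab b'.1 != odd_lab b.1 -> coef (sig b) b' = 0),
      (forall x y, coef (ext sig (brB x y)) =1 coef (bracket (sig x) (sig y))),
      (forall u, coef (ext sig u) =1 (fun _ => 0) -> coef u =1 (fun _ => 0))
    & (forall v, exists u, coef (ext sig u) =1 coef v)].

End Alg.

(* Surjectivity gives G_0 = sigma(v), and since sigma preserves parity v may be
   taken odd.  Brackets of H_n with odd basis vectors vanish, so
   [sigma(H_n), G_0] = sigma([H_n, v]) = 0.  The I_(k+s)-coefficient of [x, G_0]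
   is the G_k-coefficient of x, hence sigma(H_n) has no G-component; it has no
   L- or I-component by parity. *)
From HB Require Import structures.
From mathcomp Require Import all_boot all_order all_algebra.
Set Implicit Arguments. Unset Strict Implicit. Unset Printing Implicit Defensive.
Import Order.TTheory GRing.Theory Num.Theory.
Local Open Scope ring_scope.

Section LieSuperalgebra.
Variables (F : fieldType) (hs : bool) (lam : F).

Definition lin (g : B -> F) (u : elt F) : F := \sum_(x <- u) x.1 * g x.2.

Definition odd_part (u : elt F) : elt F := [seq x <- u | odd_lab x.2.1].

Definition parity_preserving (sig : B -> elt F) : Prop :=
  forall b b', odd_lab b'.1 != odd_lab b.1 -> coef (sig b) b' = 0.

Lemma coef_nil b : coef ([::] : elt F) b = 0.
Proof. by rewrite /coef big_nil. Qed.

Lemma coef_cons (x : F * B) u b :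
  coef (x :: u) b = (if x.2 == b then x.1 else 0) + coef u b.
Proof. by rewrite /coef big_cons; case: ifP; rewrite ?add0r. Qed.

Lemma coef_scale c (u : elt F) b : coef (scale c u) b = c * coef u b.
Proof. by rewrite /coef /scale big_map mulr_sumr. Qed.

Lemma coef_flatten (ss : seq (elt F)) b :
  coef (flatten ss) b = \sum_(s <- ss) coef s b.
Proof. by rewrite /coef big_flatten. Qed.

Lemma lin_coef_expand (g : B -> F) (S : seq B) (u : elt F) : uniq S ->
  {subset map snd u <= S} -> lin g u = \sum_(b <- S) coef u b * g b.
Proof.
rewrite /lin => uS; elim: u => [|x u IH] sub.
  by rewrite big_nil big1 // => b _; rewrite coef_nil mul0r.
rewrite big_cons IH; last by move=> y hy; apply: sub; rewrite inE hy orbT.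
under [RHS]eq_bigr => b _ do rewrite coef_cons mulrDl.
rewrite big_split /=; congr (_ + _).
have xS : x.2 \in S by apply: sub; rewrite inE eqxx.
rewrite (bigD1_seq x.2) //= eqxx big1 ?addr0 // => b hb.
by rewrite eq_sym (negbTE hb) mul0r.
Qed.

Lemma eq_lin (g : B -> F) (u v : elt F) : coef u =1 coef v -> lin g u = lin g v.
Proof.
move=> E; set S := undup (map snd (u ++ v)).
have uS : uniq S by exact: undup_uniq.
rewrite (lin_coef_expand g uS) ?(lin_coef_expand g uS (u := v)).
- by apply: eq_bigr => b _; rewrite E.
- by move=> y hy; rewrite mem_undup map_cat mem_cat hy orbT.
- by move=> y hy; rewrite mem_undup map_cat mem_cat hy.
Qed.

Lemma coef_ext (sig : B -> elt F) u b :
  coef (ext sig u) b = lin (fun a => coef (sig a) b) u.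
Proof.
rewrite /ext coef_flatten big_map; apply: eq_bigr => x _.
by rewrite coef_scale.
Qed.

Lemma coef_bracket (u v : elt F) b :
  coef (bracket hs lam u v) b =
  lin (fun a => lin (fun a' => coef (brB hs lam a a') b) v) u.
Proof.
rewrite /bracket coef_flatten big_flatten big_map; apply: eq_bigr => x _.
rewrite big_map /lin mulr_sumr; apply: eq_bigr => y _.
by rewrite coef_scale mulrA.
Qed.

Lemma coef_bracket_congr_r (w v v' : elt F) :
  coef v =1 coef v' -> coef (bracket hs lam w v) =1 coef (bracket hs lam w v').
Proof.
by move=> E b; rewrite !coef_bracket; apply: eq_bigr => x _; rewrite (eq_lin _ E).
Qed.

Lemma coef_bracket_extr (w : elt F) (sig : B -> elt F) v b :
  coef (bracket hs lam w (ext sig v)) b =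
  lin (fun a => coef (bracket hs lam w (sig a)) b) v.
Proof.
rewrite coef_bracket /lin.
under eq_bigr => x _ do rewrite /ext big_flatten big_map mulr_sumr.
rewrite exchange_big /=; apply: eq_bigr => y _.
rewrite coef_bracket /lin mulr_sumr; apply: eq_bigr => x _.
rewrite /scale big_map /= !mulr_sumr; apply: eq_bigr => z _.
by rewrite /= !mulrA [x.1 * y.1]mulrC.
Qed.

(* Among the brackets [b, G_0] of basis vectors, only [G_k, G_0] = I_(k+s)
   has an I-component. *)
Lemma coef_bracket_G0 (u : elt F) k :
  coef (bracket hs lam u (basis F (GG, 0))) (II, k + (nat_of_bool hs)%:Z)
  = coef u (GG, k).
Proof.
rewrite coef_bracket /coef big_mkcond /=; apply: eq_bigr => -[a [l j]] _ /=.
rewrite /lin big_cons big_nil addr0 mul1r.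
case: l => /=; rewrite ?big_cons ?big_nil /= ?mulr0 // addr0.
rewrite xpair_eqE /= (inj_eq (addIr _)) [(GG, j) == _]xpair_eqE /=.
by case: (j == k); rewrite ?addr0 ?mulr1 ?mulr0.
Qed.

Lemma brB_H_odd n b : odd_lab b.1 -> brB hs lam (HH, n) b = [::].
Proof. by case: b => -[] j. Qed.

Lemma coef_ext_odd_part (sig : B -> elt F) u d : parity_preserving sig ->
  coef (ext sig (odd_part u)) d = if odd_lab d.1 then coef (ext sig u) d else 0.
Proof.
move=> par; rewrite !coef_ext /lin big_filter.
case od: (odd_lab d.1).
  rewrite [RHS](bigID (fun x : F * B => odd_lab x.2.1)) /=.
  rewrite [X in _ = _ + X]big1 ?addr0 // => x /negbTE hx.
  by rewrite par ?mulr0 // hx od.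
by rewrite big1 // => x hx; rewrite par ?mulr0 // hx od.
Qed.

End LieSuperalgebra.

Theorem lemma3p3 (F : closedFieldType) (charF0 : [pchar F] =i pred0)
  (hs : bool) (lam : F) (sig : B -> elt F) :
  is_aut hs lam sig ->
  forall (n : int) (b : B), b.1 != HH -> coef (sig (HH, n)) b = 0.
Proof.
move=> [par hom _ surj] n [[] k] //= _; try by rewrite par.
have [u Hu] := surj (basis F (GG, 0)).
have G0_odd : coef (ext sig (odd_part u)) =1 coef (basis F (GG, 0)).
  move=> [l j]; rewrite coef_ext_odd_part // Hu.
  by case: l => //=; rewrite /basis coef_cons coef_nil addr0.
rewrite -(coef_bracket_G0 hs lam) -(coef_bracket_congr_r _ _ _ G0_odd).
rewrite coef_bracket_extr /lin big_filter big1 // => -[a y] y_odd.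
by rewrite -hom brB_H_odd // /ext coef_nil mulr0.
Qed.
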